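(* For each non-negative integer $\lambda$, there are either no regular Stanley sequences with character $\lambda$, or else infinitely many.
   Context: A set of non-negative integers is 3-free if no three of its elements form an arithmetic progression. For a finite 3-free set $A=\{a_0<\cdots<a_k\}$ of non-negative integers, the Stanley sequence $S(A)=(a_n)_{n\ge0}$ is the increasing sequence with initial terms $a_0,\ldots,a_k$ in which each subsequent $a_{n+1}$ is the smallest integer greater than $a_n$ such that $\{a_0,\ldots,a_{n+1}\}$ is 3-free. Throughout, Stanley sequences are in root position ($a_0=0$). A Stanley sequence $(a_n)$ is independent with character $\lambda$ if for all sufficiently large $k$: $a_{2^k+i}=a_{2^k}+a_i$ for $0\le i<2^k$, and $a_{2^k}=2a_{2^k-1}-\lambda+1$. A Stanley sequence $(a_n)$ is regular with character $\lambda$ if there exist a constant $\sigma$ and an independent Stanley sequence $(a'_n)$ of character $\lambda$ such that for all large $k$ and $0\le i<2^k$: $a_{2^k-\sigma+i}=a_{2^k-\sigma}+a'_i$ and $a_{2^k-\sigma}=2a_{2^k-\sigma-1}-\lambda+1$ (these data are unique). *)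

From mathcomp Require Import all_boot all_order all_algebra.
Set Implicit Arguments. Unset Strict Implicit. Unset Printing Implicit Defensive.
Import GRing.Theory Num.Theory.

Definition three_free (S : nat -> Prop) : Prop :=
  forall x y z, S x -> S y -> S z -> x < y -> y < z -> x + z <> 2 * y.

Definition prefix_set (a : nat -> nat) (n : nat) : nat -> Prop :=
  fun x => exists2 i, i <= n & a i = x.

Definition prefix_set_with (a : nat -> nat) (n m : nat) : nat -> Prop :=
  fun x => prefix_set a n x \/ x = m.

(** [a] is a Stanley sequence S(A) in root position, for the finite 3-free
    set A = {a_0 < ... < a_k}: a_0 = 0, the initial terms are increasing and
    3-free, and for every n >= k, a_{n+1} is the smallest integer > a_n such
    that {a_0, ..., a_{n+1}} is 3-free. *)
Definition stanley (a : nat -> nat) : Prop :=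
  a 0 = 0 /\
  exists k : nat,
    (forall i, i < k -> a i < a i.+1) /\
    three_free (prefix_set a k) /\
    (forall n, k <= n ->
       [/\ a n < a n.+1,
           three_free (prefix_set a n.+1) &
           forall m, a n < m -> m < a n.+1 -> ~ three_free (prefix_set_with a n m)]).

Definition independent (a : nat -> nat) (lam : int) : Prop :=
  stanley a /\
  exists K : nat, forall k, K <= k ->
    (forall i, i < 2 ^ k -> a (2 ^ k + i) = a (2 ^ k) + a i) /\
    ((a (2 ^ k)%N)%:Z = 2 * (a (2 ^ k - 1)%N)%:Z - lam + 1)%R.

(** Index 2^k - sigma + i (as a natural number; for large k it is non-negative). *)
Definition ridx (k : nat) (sigma : int) (i : int) : nat :=
  absz ((2 ^ k)%N%:Z - sigma + i)%R.

Definition regular (a : nat -> nat) (lam : int) : Prop :=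
  stanley a /\
  exists (sigma : int) (a' : nat -> nat),
    independent a' lam /\
    exists K : nat, forall k, K <= k ->
      (0 <= (2 ^ k)%N%:Z - sigma - 1)%R /\
      (forall i : nat, i < 2 ^ k ->
         a (ridx k sigma (Posz i)) = a (ridx k sigma 0) + a' i) /\
      ((a (ridx k sigma 0))%:Z = 2 * (a (ridx k sigma (-1)))%:Z - lam + 1)%R.

From mathcomp Require Import all_boot all_order all_algebra.
From Stdlib Require Import List Classical.
From mathcomp Require Import zify.

Set Implicit Arguments.
Unset Strict Implicit.
Unset Printing Implicit Defensive.

(* Every regular Stanley sequence of character lam comes with an independent
   Stanley sequence a of the same character, and from a we build infinitely many
   regular ones.  For large n and u > lam, raise a by u * 2 ^ (k - n) on each
   dyadic block [2 ^ k, 2 ^ k.+1) with k >= n.  Since a(2 ^ k) triples and the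
   raise doubles from one block to the next, the block structure
   b(2 ^ k + i) = b(2 ^ k) + a(i) and the character relation survive, so b is
   regular with sigma = 0 and a' = a as soon as it is a Stanley sequence.  It is
   3-free because the raise keeps consecutive blocks far enough apart that no
   progression straddles them in a new way; it is greedy beyond 2 ^ n.+1 because
   each gap is either a translated gap of a or lies just below a power of two,
   where it is closed by writing every small s as 2 a(z) + d - b(y), by induction
   on the block.  Different n give different sequences. *)

Lemma exp2_gt0 k : 0 < 2 ^ k.
Proof. by rewrite expn_gt0. Qed.

Lemma exp2S k : 2 ^ k.+1 = 2 ^ k + 2 ^ k.
Proof. by rewrite expnS mul2n addnn. Qed.

Lemma dyadic_decomp n l : 2 ^ n <= l ->
  exists k v, [/\ n <= k, v < 2 ^ k & l = 2 ^ k + v].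
Proof.
move=> nl; have l_gt0 : 0 < l by have := exp2_gt0 n; lia.
exists (trunc_log 2 l), (l - 2 ^ trunc_log 2 l); split.
- exact: trunc_log_max.
- by have := @trunc_log_ltn 2 l (erefl _); rewrite exp2S; lia.
- by have := trunc_logP (erefl : 1 < 2) l_gt0; lia.
Qed.

Section Increasing.
Variable f : nat -> nat.
Hypothesis f_incr : forall i, f i < f i.+1.

Lemma incr_ltn : {mono f : i j / i < j}.
Proof.
exact/Order.POrderTheory.leW_mono/Order.TotalTheory.le_mono/(homo_ltn ltn_trans f_incr).
Qed.

Lemma incr_leq : {mono f : i j / i <= j}.
Proof. exact/Order.TotalTheory.le_mono/(homo_ltn ltn_trans f_incr). Qed.

Lemma leq_incr i : i <= f i.
Proof. by elim: i => // i ih; have := f_incr i; lia. Qed.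

Lemma incr_bracket s : f 0 = 0 -> exists v, f v <= s < f v.+1.
Proof.
move=> f0; elim: s => [|s [v /andP [fv_s s_fv1]]].
  by exists 0; have := f_incr 0; rewrite f0.
case: (ltnP s.+1 (f v.+1)) => s_fv1'; first by exists v; apply/andP; split; lia.
by exists v.+1; have := f_incr v.+1; lia.
Qed.

End Increasing.

Definition ap_free (f : nat -> nat) : Prop :=
  forall i j l, i < j -> j < l -> f i + f l <> 2 * f j.

Definition ap_free_below (f : nat -> nat) (m : nat) : Prop :=
  forall i j l, i < j -> j < l -> l < m -> f i + f l <> 2 * f j.

Definition blocked (f : nat -> nat) (p x : nat) : Prop :=
  exists i j, [/\ i < j, j <= p & f i + x = 2 * f j].

Definition greedy_from (f : nat -> nat) (k0 : nat) : Prop :=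
  forall p x, k0 <= p -> f p < x -> x < f p.+1 -> blocked f p x.

Lemma blocked_shift (f g : nat -> nat) m p x :
  (forall y, y < m -> f (m + y) = f m + g y) -> p < m ->
  blocked g p x -> blocked f (m + p) (f m + x).
Proof.
move=> f_block pm [i [j [ij jp e]]]; exists (m + i), (m + j); split; try lia.
by rewrite !f_block; lia.
Qed.

(* A progression meeting both halves has either only its first term below m, which
   the gap hypothesis rules out, or only its last term at or above m. *)
Lemma ap_free_below_double (g h : nat -> nat) m :
  (forall i, g i < g i.+1) -> (forall i, h i < h i.+1) ->
  (forall y, y < m -> g (m + y) = g m + h y) ->
  ap_free_below g m -> ap_free h ->
  g (m - 1) + h (m - 1) < g m ->
  (forall i j v, i < j -> j < m -> v < m -> g i + (g m + h v) <> 2 * g j) ->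
  ap_free_below g (m + m).
Proof.
move=> g_incr h_incr g_block g_ap h_ap top_gap no_across i j l ij jl lmm.
case: (ltnP l m) => [lm|ml]; first exact: g_ap.
have -> : l = m + (l - m) by lia.
rewrite g_block; last lia.
case: (ltnP j m) => [jm|mj]; first by apply: no_across; lia.
have -> : j = m + (j - m) by lia.
rewrite g_block; last lia.
case: (ltnP i m) => [im|mi].
  have : g i <= g (m - 1) by rewrite (incr_leq g_incr); lia.
  have : h (l - m) <= h (m - 1) by rewrite (incr_leq h_incr); lia.
  lia.
have -> : i = m + (i - m) by lia.
rewrite g_block; last lia.
by move=> e; apply: (h_ap (i - m) (j - m) (l - m)); lia.
Qed.

Section PrefixSets.
Variable f : nat -> nat.
Hypothesis f_incr : forall i, f i < f i.+1.

Lemma ap_free_prefix_set : ap_free f -> forall p, three_free (prefix_set f p).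
Proof.
move=> f_ap p _ _ _ [i _ <-] [j _ <-] [l _ <-].
rewrite !(incr_ltn f_incr); exact: f_ap.
Qed.

Lemma ap_free_of_prefix_sets k :
  (forall p, k <= p -> three_free (prefix_set f p)) -> ap_free f.
Proof.
move=> tf i j l ij jl; apply: (tf (maxn l k) (leq_maxr _ _)).
- by exists i => //; apply: leq_trans (leq_maxl _ _); lia.
- by exists j => //; apply: leq_trans (leq_maxl _ _); lia.
- by exists l => //; exact: leq_maxl.
- by rewrite (incr_ltn f_incr).
- by rewrite (incr_ltn f_incr).
Qed.

Lemma three_free_prefix_set_withP p x : ap_free f -> f p < x ->
  three_free (prefix_set_with f p x) <-> ~ blocked f p x.
Proof.
have le_fp i : i <= p -> f i <= f p by rewrite (incr_leq f_incr).
move=> f_ap px; split.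
  move=> tf [i [j [ij jp e]]]; apply: (tf (f i) (f j) x) => //.
  - by left; exists i => //; lia.
  - by left; exists j.
  - by right.
  - by rewrite (incr_ltn f_incr).
  - by have := le_fp j jp; lia.
move=> nb y1 y2 y3 Y1 Y2 Y3 y12 y23.
have below y : prefix_set f p y -> y < x by case=> i ip <-; have := le_fp i ip; lia.
have in_prefix y : prefix_set_with f p x y -> y < x -> prefix_set f p y.
  by case=> // ->; rewrite ltnn.
case: Y3 => [Y3|y3x]; last subst y3.
  have y3x := below _ Y3.
  apply: (ap_free_prefix_set f_ap (in_prefix _ Y1 _) (in_prefix _ Y2 _) Y3 y12 y23); lia.
have [i _ fi] := in_prefix _ Y1 (ltn_trans y12 y23).
have [j jp fj] := in_prefix _ Y2 y23.
subst y1 y2; rewrite (incr_ltn f_incr) in y12.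
by move=> e; apply: nb; exists i, j.
Qed.

End PrefixSets.

Lemma stanleyP f : stanley f <->
  [/\ f 0 = 0, forall i, f i < f i.+1, ap_free f & exists k0, greedy_from f k0].
Proof.
split.
  case=> f0 [k [incr_k [tf_k greedy]]].
  have f_incr i : f i < f i.+1.
    by case: (ltnP i k) => [/incr_k | /greedy []].
  have tf p : k <= p -> three_free (prefix_set f p).
    rewrite leq_eqVlt => /orP [/eqP <- //|]; case: p => // p kp.
    by case: (greedy p kp).
  have f_ap := ap_free_of_prefix_sets f_incr tf.
  split=> //; exists k => p x kp px xp.
  apply: NNPP; rewrite -(three_free_prefix_set_withP f_incr) //.
  by case: (greedy p kp) => _ _ /(_ x px xp).
case=> f0 f_incr f_ap [k0 greedy]; split=> //; exists k0.
split; first by move=> i _; exact: f_incr.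
split; first exact: ap_free_prefix_set.
move=> p kp; split; [exact: f_incr | exact: ap_free_prefix_set |].
move=> x px xp; rewrite three_free_prefix_set_withP //.
by move/(_ (greedy p x kp px xp)).
Qed.

(* With g the raised sequence below, these representations close the gaps just
   below the powers of two. *)
Definition represents (f g : nat -> nat) (m d : nat) : Prop :=
  forall s, s < f m + d -> exists z y, [/\ z < m, y < m & 2 * f z + d = g y + s].

Lemma represents_le (f g : nat -> nat) m d d' :
  d' <= d -> represents f g m d -> represents f g m d'.
Proof.
move=> dd rep s s_lt; have [z [y [zm ym e]]] := rep (s + (d - d')) ltac:(lia).
by exists z, y; split=> //; lia.
Qed.

Definition block_weight (n j : nat) : nat :=
  if j < 2 ^ n then 0 else 2 ^ (trunc_log 2 j - n).

Definition raise (a : nat -> nat) (u n j : nat) : nat := a j + u * block_weight n j.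

Lemma block_weight_low n j : j < 2 ^ n -> block_weight n j = 0.
Proof. by rewrite /block_weight => ->. Qed.

Lemma block_weight_block n k i : n <= k -> i < 2 ^ k ->
  block_weight n (2 ^ k + i) = 2 ^ (k - n).
Proof.
move=> nk ik; have nk2 : 2 ^ n <= 2 ^ k by rewrite leq_exp2l.
rewrite /block_weight ifF; last by apply/negbTE; rewrite -leqNgt; lia.
by rewrite (@trunc_log_eq 2 k) // exp2S; lia.
Qed.

Lemma block_weight_mono n : {homo block_weight n : x y / x <= y}.
Proof.
move=> x y xy; rewrite /block_weight; case: ifP => x_lo; case: ifP => y_lo //; first lia.
by rewrite leq_exp2l // leq_sub2r // leq_trunc_log.
Qed.

Lemma raise_incr a u n : (forall i, a i < a i.+1) -> forall i, raise a u n i < raise a u n i.+1.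
Proof.
move=> a_incr i; rewrite /raise.
by have := leq_mul (leqnn u) (block_weight_mono n (leqnSn i)); have := a_incr i; lia.
Qed.

Lemma raise_neq a u n n' : 0 < u -> n < n' -> raise a u n <> raise a u n'.
Proof.
move=> u_gt0 nn' /(congr1 (fun f => f (2 ^ n))); rewrite /raise.
rewrite -[2 ^ n]addn0 block_weight_block ?exp2_gt0 // subnn block_weight_low.
  by lia.
by rewrite addn0 ltn_exp2l.
Qed.

Lemma raise_inj a u : 0 < u -> injective (raise a u).
Proof.
move=> u_gt0 n n' e; case: (ltngtP n n') => // lt.
- by case: (raise_neq (a := a) u_gt0 lt e).
- by case: (raise_neq (a := a) u_gt0 lt (esym e)).
Qed.

Record indep_spec (a : nat -> nat) (lam K k0 : nat) : Prop := IndepSpec {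
  indep_a0 : a 0 = 0;
  indep_incr : forall i, a i < a i.+1;
  indep_ap_free : ap_free a;
  indep_greedy : greedy_from a k0;
  indep_block : forall k i, K <= k -> i < 2 ^ k -> a (2 ^ k + i) = a (2 ^ k) + a i;
  indep_char : forall k, K <= k -> a (2 ^ k) + lam = 2 * a (2 ^ k - 1) + 1 }.

Lemma independentP a lam :
  independent a (Posz lam) -> exists K k0, indep_spec a lam K k0.
Proof.
case=> /stanleyP [a0 a_incr a_ap [k0 greedy]] [K block_char].
exists K, k0; split=> // k.
- by move=> i Kk; case: (block_char k Kk) => /(_ i).
- by move=> Kk; case: (block_char k Kk) => _; lia.
Qed.

Section Independent.
Variables (a : nat -> nat) (lam K k0 : nat).
Hypothesis Ha : indep_spec a lam K k0.

Let a_incr := indep_incr Ha.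
Let a_block := indep_block Ha.
Let a_char := indep_char Ha.

Lemma indep_top k : K <= k -> a (2 ^ k.+1 - 1) = a (2 ^ k) + a (2 ^ k - 1).
Proof.
move=> Kk; have k_gt0 := exp2_gt0 k.
by rewrite exp2S -addnBA // a_block //; lia.
Qed.

Lemma indep_pow_succ k : K <= k -> a (2 ^ k.+1) = 3 * a (2 ^ k).
Proof.
by move=> Kk; have := a_char (leqW Kk); have := a_char Kk; have := indep_top Kk; lia.
Qed.

Lemma indep_top_lt_pow k : a (2 ^ k - 1) < a (2 ^ k).
Proof. by rewrite (incr_ltn a_incr); have := exp2_gt0 k; lia. Qed.

Lemma indep_shift k j : K <= k -> 2 ^ k <= j -> j < 2 ^ k.+1 ->
  a j = a (2 ^ k) + a (j - 2 ^ k).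
Proof. by move=> Kk kj jk; rewrite -a_block ?subnKC //; move: jk; rewrite exp2S; lia. Qed.

Definition large_level k := [/\ K <= k, k0 < 2 ^ k & a k0 + lam < a (2 ^ k - 1)].

Lemma large_levelW k l : large_level k -> k <= l -> large_level l.
Proof.
case=> Kk k0k big kl; have kl2 : 2 ^ k <= 2 ^ l by rewrite leq_exp2l.
split; [lia | lia |]; apply: (leq_trans big); rewrite (incr_leq a_incr); lia.
Qed.

Lemma exists_large_level : exists k, large_level k.
Proof.
set k := (K + k0 + a k0 + lam).+1; exists k.
have := ltn_expl k (erefl : 1 < 2); have := leq_incr a_incr (2 ^ k - 1).
by rewrite /k => *; split; lia.
Qed.

(* Below k0 the greedy rule is applied to the translated gap at 2 ^ k + v instead;
   the progression it yields either lies in block k, and translates back, or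
   wraps around to the first block. *)
Lemma blocked_or_wraps k v x : large_level k -> v < k0 -> a v < x -> x < a v.+1 ->
  blocked a v x \/ exists i j, [/\ i < j, j < 2 ^ k & a (2 ^ k + i) + x = 2 * a j].
Proof.
case=> Kk k0k big vk0 vx xv.
have lo : a (2 ^ k + v) = a (2 ^ k) + a v by apply: a_block; lia.
have hi : a (2 ^ k + v).+1 = a (2 ^ k) + a v.+1 by rewrite -addnS a_block //; lia.
have [i [j [ij jp e]]] : blocked a (2 ^ k + v) (a (2 ^ k) + x).
  by apply: (indep_greedy Ha); lia.
case: (ltnP j (2 ^ k)) => jk.
  by right; exists i, j; split=> //; rewrite a_block; lia.
have jk1 : j < 2 ^ k.+1 by rewrite exp2S; lia.
have ej := indep_shift Kk jk jk1.
case: (ltnP i (2 ^ k)) => ik.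
  have : a i <= a (2 ^ k - 1) by rewrite (incr_leq a_incr); lia.
  have : a v.+1 <= a k0 by rewrite (incr_leq a_incr).
  by have := a_char Kk; lia.
have ei := indep_shift Kk ik (ltn_trans ij jk1).
by left; exists (i - 2 ^ k), (j - 2 ^ k); split; lia.
Qed.

Lemma represents_base k : large_level k -> represents a a (2 ^ k.+1) 0.
Proof.
move=> large s; rewrite addn0 => s_lt.
have [v /andP [vs sv]] := incr_bracket a_incr s (indep_a0 Ha).
have vk : v < 2 ^ k.+1 by rewrite -(incr_ltn a_incr); lia.
have from_blocked : blocked a v s -> exists z y,
    [/\ z < 2 ^ k.+1, y < 2 ^ k.+1 & 2 * a z + 0 = a y + s].
  by case=> i [j [ij jv e]]; exists j, i; split; lia.
case: (ltnP (a v) s) => [{}vs|sv']; last by exists v, v; split; lia.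
case: (leqP k0 v) => [k0v|vk0]; first exact/from_blocked/(indep_greedy Ha).
case: (blocked_or_wraps large vk0 vs sv) => [|[i [j [ij jk e]]]]; first exact: from_blocked.
by exists j, (2 ^ k + i); rewrite exp2S; split; lia.
Qed.

Lemma represents_step k d : K <= k ->
  represents a a (2 ^ k) d -> represents a a (2 ^ k.+1) (a (2 ^ k) + d).
Proof.
move=> Kk rep s; rewrite indep_pow_succ // exp2S => s_lt.
have shift z : z < 2 ^ k -> a (2 ^ k + z) = a (2 ^ k) + a z by move/(a_block Kk).
case: (ltnP s (a (2 ^ k) + d)) => s1.
  have [z [y [zk yk e]]] := rep s s1.
  by exists z, (2 ^ k + y); rewrite shift //; split; lia.
case: (ltnP s (2 * a (2 ^ k) + d)) => s2.
  have [z [y [zk yk e]]] := rep (s - a (2 ^ k)) ltac:(lia).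
  by exists z, y; split; lia.
case: (ltnP s (3 * a (2 ^ k) + d)) => s3.
  have [z [y [zk yk e]]] := rep (s - 2 * a (2 ^ k)) ltac:(lia).
  by exists (2 ^ k + z), (2 ^ k + y); rewrite !shift //; split; lia.
have [z [y [zk yk e]]] := rep (s - 3 * a (2 ^ k)) ltac:(lia).
by exists (2 ^ k + z), y; rewrite shift //; split; lia.
Qed.

Lemma represents_large k : large_level k ->
  forall j, k.+2 <= j -> represents a a (2 ^ j) (a (2 ^ k.+1)).
Proof.
move=> large j kj; have [Kk _ _] := large.
rewrite -(subnKC kj); elim: (j - k.+2) => [|i ih].
  by rewrite addn0 -[a _]addn0; exact: represents_step (leqW Kk) (represents_base large).
rewrite addnS; apply: (represents_le _ (represents_step _ ih)); lia.
Qed.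

Section Raise.
Variables (n u : nat).
Hypothesis n_large : large_level n.
Hypothesis a_rep : represents a a (2 ^ n) u.
Hypothesis lam_lt_u : lam < u.
Hypothesis u_le_pow : u <= a (2 ^ n).

Let b := raise a u n.
Let bump k := u * 2 ^ (k - n).
Let b_incr : forall i, b i < b i.+1 := raise_incr u n a_incr.
Let n_K : K <= n. Proof. by case: n_large. Qed.

Lemma raise_low j : j < 2 ^ n -> b j = a j.
Proof. by move=> jn; rewrite /b /raise block_weight_low // muln0 addn0. Qed.

Lemma raise_pow k : n <= k -> b (2 ^ k) = a (2 ^ k) + bump k.
Proof.
move=> nk; have := block_weight_block nk (exp2_gt0 k); rewrite addn0 => w.
by rewrite /b /raise w.
Qed.

Lemma raise_block k : n <= k -> forall i, i < 2 ^ k -> b (2 ^ k + i) = b (2 ^ k) + a i.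
Proof.
move=> nk i ik; rewrite raise_pow // /b /raise block_weight_block // a_block /bump; lia.
Qed.

Lemma raise_top k : n <= k -> b (2 ^ k.+1 - 1) = b (2 ^ k) + a (2 ^ k - 1).
Proof.
move=> nk; have k_gt0 := exp2_gt0 k.
by rewrite exp2S -addnBA // raise_block //; lia.
Qed.

Lemma bump_succ k : n <= k -> bump k.+1 = 2 * bump k.
Proof. by move=> nk; rewrite /bump subSn // expnS; lia. Qed.

Lemma bump_ge k : u <= bump k.
Proof. by rewrite /bump leq_pmulr ?exp2_gt0. Qed.

Lemma raise_char k : n <= k -> b (2 ^ k.+1) + lam = 2 * b (2 ^ k.+1 - 1) + 1.
Proof.
move=> nk; have Kk := leq_trans n_K nk.
rewrite raise_top // (raise_pow (leqW nk)) (raise_pow nk) bump_succ // indep_pow_succ //.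
by have := a_char Kk; lia.
Qed.

Lemma bump_le_pow k : n <= k -> bump k <= a (2 ^ k).
Proof.
move=> nk; rewrite -(subnKC nk); elim: (k - n) => [|i ih].
  by rewrite addn0 /bump subnn muln1.
by rewrite addnS bump_succ ?indep_pow_succ; lia.
Qed.

Lemma represents_bump k : n <= k -> represents a a (2 ^ k) (bump k).
Proof.
move=> nk; rewrite -(subnKC nk); elim: (k - n) => [|i ih].
  by rewrite addn0 /bump subnn muln1.
rewrite addnS bump_succ; last lia.
apply: represents_le (represents_step _ ih); last lia.
by have := bump_le_pow (leq_addr i n); lia.
Qed.

Lemma raise_shift k j : n <= k -> 2 ^ k <= j -> j < 2 ^ k.+1 ->
  b j = b (2 ^ k) + a (j - 2 ^ k).
Proof. by move=> nk kj jk; rewrite -raise_block ?subnKC //; move: jk; rewrite exp2S; lia. Qed.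

Lemma represents_raise_step k : n <= k ->
  represents a b (2 ^ k) (bump k) -> represents a b (2 ^ k.+1) (bump k.+1).
Proof.
move=> nk rep s; have Kk := leq_trans n_K nk.
have rep_a := represents_bump nk; have bump_le := bump_le_pow nk.
have b_shift y : y < 2 ^ k -> b (2 ^ k + y) = a (2 ^ k) + bump k + a y.
  by move=> yk; rewrite raise_block // raise_pow.
have a_shift y : y < 2 ^ k -> a (2 ^ k + y) = a (2 ^ k) + a y by move/(a_block Kk).
rewrite indep_pow_succ // bump_succ // exp2S => s_lt.
case: (ltnP s (bump k)) => s1.
  have [z [y [zk yk e]]] := rep_a (a (2 ^ k) + s) ltac:(lia).
  by exists z, (2 ^ k + y); rewrite b_shift //; split; lia.
case: (ltnP s (a (2 ^ k) + 2 * bump k)) => s2.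
  have [z [i [zk ik e]]] := rep (s - bump k) ltac:(lia).
  by exists z, i; split; lia.
case: (ltnP s (2 * a (2 ^ k) + bump k)) => s3.
  have [z [y [zk yk e]]] := rep_a (s - a (2 ^ k)) ltac:(lia).
  by exists (2 ^ k + z), (2 ^ k + y); rewrite a_shift // b_shift //; split; lia.
have [z [i [zk ik e]]] := rep (s - 2 * a (2 ^ k) - bump k) ltac:(lia).
by exists (2 ^ k + z), i; rewrite a_shift //; split; lia.
Qed.

Lemma represents_raise k : n <= k -> represents a b (2 ^ k) (bump k).
Proof.
move=> nk; rewrite -(subnKC nk); elim: (k - n) => [|i ih].
  rewrite addn0 /bump subnn muln1 => s /a_rep [z [y [zn yn e]]].
  by exists z, y; rewrite raise_low.
by rewrite addnS; apply: represents_raise_step; first lia.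
Qed.

Lemma raise_first_pow : b (2 ^ n) = a (2 ^ n) + u.
Proof. by rewrite raise_pow // /bump subnn muln1. Qed.

Lemma raise_top_gap k : n <= k -> b (2 ^ k - 1) + a (2 ^ k - 1) < b (2 ^ k).
Proof.
rewrite leq_eqVlt => /orP [/eqP <-|].
  rewrite raise_first_pow raise_low; last by have := exp2_gt0 n; lia.
  by have := a_char n_K; lia.
case: k => // k nk; have Kk := leq_trans n_K nk.
rewrite raise_top // indep_top // (raise_pow nk) (raise_pow (leqW nk)) bump_succ // indep_pow_succ //.
by have := a_char Kk; have := bump_ge k; lia.
Qed.

Lemma raise_no_ap_across k : n <= k ->
  forall i j v, i < j -> j < 2 ^ k -> v < 2 ^ k -> b i + (b (2 ^ k) + a v) <> 2 * b j.
Proof.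
move=> + i j v ij; rewrite leq_eqVlt => /orP [/eqP <- jn vn|].
  have : a j <= a (2 ^ n - 1) by rewrite (incr_leq a_incr); lia.
  rewrite raise_first_pow (raise_low jn).
  by have := a_char n_K; lia.
(* Otherwise the middle term lies in the previous block and the first term among
   the first 2 ^ n terms, where b agrees with a: the progression is one of a. *)
case: k => // k nk jk vk; have Kk := leq_trans n_K nk; have kS := exp2S k.
rewrite (raise_pow (leqW nk)) bump_succ // indep_pow_succ // => e.
case: (ltnP j (2 ^ k)) => [jk'|kj].
  have : b j < b (2 ^ k) by rewrite (incr_ltn b_incr).
  by rewrite raise_pow //; lia.
move: e; rewrite (raise_shift nk kj jk) raise_pow // => e.
have : a (j - 2 ^ k) <= a (2 ^ k - 1) by rewrite (incr_leq a_incr); lia.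
have := a_char Kk => char aj.
have i_n : i < 2 ^ n.
  by rewrite -(incr_ltn b_incr) raise_first_pow; lia.
apply: (indep_ap_free Ha (l := 2 ^ k.+1 + v) ij); first lia.
rewrite (a_block (leqW Kk) vk) indep_pow_succ // (indep_shift Kk kj jk) -(raise_low i_n); lia.
Qed.

Lemma raise_ap_free_below k : n <= k -> ap_free_below b (2 ^ k).
Proof.
move=> nk; rewrite -(subnKC nk); elim: (k - n) => [|d ih].
  rewrite addn0 => i j l ij jl ln; rewrite !raise_low; try lia.
  exact: (indep_ap_free Ha).
rewrite addnS exp2S; apply: (ap_free_below_double b_incr a_incr _ ih (indep_ap_free Ha)).
- by move=> y; apply: raise_block; lia.
- by apply: raise_top_gap; lia.
- by apply: raise_no_ap_across; lia.
Qed.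

Lemma raise_ap_free : ap_free b.
Proof.
move=> i j l ij jl; apply: (raise_ap_free_below (leq_addr l n) ij jl).
by apply: leq_trans (ltn_expl l (erefl : 1 < 2)) _; rewrite leq_exp2l // leq_addl.
Qed.

Lemma raise_blocked_top k x : n <= k -> b (2 ^ k.+1 - 1) < x -> x < b (2 ^ k.+1) ->
  blocked b (2 ^ k.+1 - 1) x.
Proof.
move=> nk; have Kk := leq_trans n_K nk; have [_ k0k _] := large_levelW n_large nk.
have kS := exp2S k; have k_gt0 := exp2_gt0 k.
rewrite raise_top // (raise_pow (leqW nk)) bump_succ // indep_pow_succ // => lo hi.
have bk := raise_pow nk.
case: (ltnP (x - b (2 ^ k)) (a (2 ^ k))) => w.
  have kS1 : (2 ^ k - 1).+1 = 2 ^ k by lia.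
  have bl : blocked a (2 ^ k - 1) (x - b (2 ^ k)).
    by apply: (indep_greedy Ha); rewrite ?kS1; lia.
  have top_k : 2 ^ k - 1 < 2 ^ k by lia.
  have := blocked_shift (raise_block nk) top_k bl.
  have -> : 2 ^ k + (2 ^ k - 1) = 2 ^ k.+1 - 1 by lia.
  by rewrite subnKC //; lia.
have [z [i [zk ik e]]] := represents_raise nk (s := x - b (2 ^ k) - a (2 ^ k)) ltac:(lia).
by exists i, (2 ^ k + z); rewrite raise_block //; split; lia.
Qed.

Lemma raise_blocked_inner k v x : n <= k -> v.+1 < 2 ^ k.+1 ->
  b (2 ^ k.+1 + v) < x -> x < b (2 ^ k.+1 + v.+1) -> blocked b (2 ^ k.+1 + v) x.
Proof.
move=> nk vk; have Kk := leq_trans n_K nk; have kS := exp2S k.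
have b_shift := raise_block (leqW nk).
rewrite !b_shift //; try lia; move=> lo hi.
have -> : x = b (2 ^ k.+1) + (x - b (2 ^ k.+1)) by lia.
have lifted : blocked a v (x - b (2 ^ k.+1)) ->
    blocked b (2 ^ k.+1 + v) (b (2 ^ k.+1) + (x - b (2 ^ k.+1))).
  by move/(blocked_shift b_shift); apply; lia.
case: (leqP k0 v) => [k0v|vk0].
  by apply/lifted/(indep_greedy Ha); lia.
have large_k := large_levelW n_large (leqW nk).
have gap_lo : a v < x - b (2 ^ k.+1) by lia.
have gap_hi : x - b (2 ^ k.+1) < a v.+1 by lia.
case: (blocked_or_wraps large_k vk0 gap_lo gap_hi) => [|[i [j [ij jk e]]]]; first exact: lifted.
have ik : i < 2 ^ k.+1 by lia.
move: e; rewrite (a_block (leqW Kk) ik) indep_pow_succ // => e; have := a_char Kk => char.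
have [jk'|kj] := ltnP j (2 ^ k).
  have : a j <= a (2 ^ k - 1) by rewrite (incr_leq a_incr); lia.
  by have := indep_top_lt_pow k; lia.
have ea := indep_shift Kk kj jk.
have : a (j - 2 ^ k) <= a (2 ^ k - 1) by rewrite (incr_leq a_incr); lia.
have [_ _ big] := n_large; have := indep_top_lt_pow n => n_top aj.
have i_n : i < 2 ^ n by rewrite -(incr_ltn a_incr); lia.
exists i, j; split; try lia.
have bk1 : b (2 ^ k.+1) = 3 * a (2 ^ k) + 2 * bump k.
  by rewrite (raise_pow (leqW nk)) bump_succ // indep_pow_succ.
by rewrite raise_low // (raise_shift nk kj jk) (raise_pow nk) bk1; lia.
Qed.

Lemma raise_greedy : greedy_from b (2 ^ n.+1 - 1).
Proof.
move=> p x np lo hi; have [|k [v [nk vk ep]]] := @dyadic_decomp n.+1 p.+1; first lia.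
case: k nk vk ep => // k nk vk ep.
case: v vk ep => [|v] vk ep.
  move: hi; rewrite ep addn0 => hi.
  have ep' : p = 2 ^ k.+1 - 1 by lia.
  by rewrite ep' in lo *; apply: raise_blocked_top.
move: hi; rewrite ep => hi.
have ep' : p = 2 ^ k.+1 + v by lia.
by rewrite ep' in lo *; apply: raise_blocked_inner.
Qed.

Lemma raise_stanley : stanley b.
Proof.
apply/stanleyP; split; [|exact: b_incr|exact: raise_ap_free|by exists (2 ^ n.+1 - 1); exact: raise_greedy].
by rewrite raise_low ?(indep_a0 Ha) ?exp2_gt0.
Qed.

Lemma raise_regular : independent a (Posz lam) -> regular b (Posz lam).
Proof.
move=> a_indep; split; first exact: raise_stanley.
exists 0%R, a; split=> //; exists n.+1 => k nk; have k_gt0 := exp2_gt0 k.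
have e0 : ridx k 0 0 = 2 ^ k by rewrite /ridx; lia.
have em1 : ridx k 0 (-1) = 2 ^ k - 1 by rewrite /ridx; lia.
split; first lia; split.
  move=> i ik; have -> : ridx k 0 (Posz i) = 2 ^ k + i by rewrite /ridx; lia.
  by rewrite e0 raise_block //; lia.
rewrite e0 em1; case: k nk {k_gt0 e0 em1} => // k nk.
by have := raise_char nk; lia.
Qed.

End Raise.
End Independent.

Lemma list_avoid (T : Type) (F : nat -> T) :
  injective F -> forall (l : list T) N, exists n, N <= n /\ ~ List.In (F n) l.
Proof.
move=> F_inj; elim=> [|t l ih] N; first by exists N; split.
have [n1 [Nn1 n1l]] := ih N.
case: (classic (t = F n1)) => [->|tn1]; last by exists n1; split=> // -[/tn1|].
have [n2 [n1n2 n2l]] := ih n1.+1.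
exists n2; split; first lia.
by case=> // /F_inj n12; lia.
Qed.

Lemma regular_family a lam : independent a (Posz lam) ->
  exists N, forall n, N <= n -> regular (raise a lam.+1 n) (Posz lam).
Proof.
move=> a_indep; have [K [k0 Ha]] := independentP a_indep.
have a_incr := indep_incr Ha.
have [J large] := exists_large_level Ha; have [_ _ big] := large.
have lam_lt : lam < a (2 ^ J.+1).
  have := indep_top_lt_pow Ha J; have : a (2 ^ J) <= a (2 ^ J.+1).
    by rewrite (incr_leq a_incr) leq_exp2l.
  lia.
exists J.+2 => n Jn; have Jn' : J <= n by lia.
apply: (raise_regular Ha (large_levelW Ha large Jn') _ (ltnSn lam) _ a_indep).
- exact: represents_le (represents_large Ha large Jn).
- apply: leq_trans lam_lt _; rewrite (incr_leq a_incr) leq_exp2l //; lia.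
Qed.

Theorem mainTheorem17 (lam : nat) :
  (~ exists a : nat -> nat, regular a (Posz lam)) \/
  (forall l : list (nat -> nat),
     exists a : nat -> nat, regular a (Posz lam) /\ forall b, List.In b l -> a <> b).
Proof.
have [[_ [_ [_ [a [a_indep _]]]]]|] := classic (exists a, regular a (Posz lam)); last by left.
right=> l; have [N reg] := regular_family a_indep.
have [n [Nn nl]] := list_avoid (raise_inj (a := a) (ltn0Sn lam)) l N.
exists (raise a lam.+1 n); split; first exact: reg.
by move=> b bl e; apply: nl; rewrite e.
Qed.
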